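(* Let $\alpha>0$, let $f^-(x)=x$ on $[0,1]$, and let $f^+:[0,1]\to[0,1]$. If $ALG(uvw)\le\alpha\,LP(uvw)$ for every $(+,+,-)$-triangle whose edge lengths lie in $[0,1]$ and satisfy the triangle inequalities, then for every $x\in[0,1/2]$, \[ f^+(x)\ \ge\ \frac{8x-4\alpha x^2-\sqrt{(4\alpha x^2-8x)^2-4(1-\alpha+4x)(1+\alpha-2\alpha x)}}{2(1+\alpha-2\alpha x)}. \]
   Context: A triangle $uvw$ has pairs $uv,vw,uw$, each a positive ($+$) or negative ($-$) edge with length $x_e\in[0,1]$; triangle inequalities: each length is at most the sum of the other two. Let $p_e=f^+(x_e)$ for positive and $p_e=f^-(x_e)$ for negative edges. For a pair $(u,v)$ with third vertex $w$: $e.cost_w(u,v)=p_{uw}(1-p_{vw})+(1-p_{uw})p_{vw}$ if $(u,v)$ is positive, $(1-p_{uw})(1-p_{vw})$ if negative; $e.lp_w(u,v)=(1-p_{uw}p_{vw})x_{uv}$ if positive, $(1-p_{uw}p_{vw})(1-x_{uv})$ if negative. $ALG(uvw)=e.cost_w(u,v)+e.cost_v(w,u)+e.cost_u(v,w)$, $LP(uvw)=e.lp_w(u,v)+e.lp_v(w,u)+e.lp_u(v,w)$. A $(+,+,-)$-triangle has two positive edges and one negative edge. *)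

From Stdlib Require Import Reals.
Open Scope R_scope.

(* Edge signs: true = positive (+), false = negative (-). *)

Definition pval (fplus fminus : R -> R) (s : bool) (x : R) : R :=
  if s then fplus x else fminus x.

(* e.cost_w(u,v) given sign of (u,v), p_uw and p_vw. *)
Definition ecost (s_uv : bool) (p_uw p_vw : R) : R :=
  if s_uv then p_uw * (1 - p_vw) + (1 - p_uw) * p_vw
  else (1 - p_uw) * (1 - p_vw).

(* e.lp_w(u,v) given sign of (u,v), p_uw, p_vw and x_uv. *)
Definition elp (s_uv : bool) (p_uw p_vw x_uv : R) : R :=
  if s_uv then (1 - p_uw * p_vw) * x_uv
  else (1 - p_uw * p_vw) * (1 - x_uv).

Definition ALG (fplus fminus : R -> R) (s_uv s_vw s_uw : bool)
    (x_uv x_vw x_uw : R) : R :=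
  let p_uv := pval fplus fminus s_uv x_uv in
  let p_vw := pval fplus fminus s_vw x_vw in
  let p_uw := pval fplus fminus s_uw x_uw in
  ecost s_uv p_uw p_vw
  + ecost s_uw p_vw p_uv
  + ecost s_vw p_uv p_uw.

Definition LP (fplus fminus : R -> R) (s_uv s_vw s_uw : bool)
    (x_uv x_vw x_uw : R) : R :=
  let p_uv := pval fplus fminus s_uv x_uv in
  let p_vw := pval fplus fminus s_vw x_vw in
  let p_uw := pval fplus fminus s_uw x_uw in
  elp s_uv p_uw p_vw x_uv
  + elp s_uw p_vw p_uv x_uw
  + elp s_vw p_uv p_uw x_vw.

Definition ppm_signs (s_uv s_vw s_uw : bool) : Prop :=
  (s_uv = true /\ s_vw = true /\ s_uw = false) \/
  (s_uv = true /\ s_vw = false /\ s_uw = true) \/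
  (s_uv = false /\ s_vw = true /\ s_uw = true).

Definition valid_lengths (x_uv x_vw x_uw : R) : Prop :=
  0 <= x_uv <= 1 /\ 0 <= x_vw <= 1 /\ 0 <= x_uw <= 1 /\
  x_uv <= x_vw + x_uw /\ x_vw <= x_uv + x_uw /\ x_uw <= x_uv + x_vw.

(* Test the hypothesis on the degenerate (+,+,-)-triangle with positive edges of
   length x and negative edge of length 2x (valid since 2x <= 1).  With p = f^+(x)
   the inequality ALG <= alpha LP becomes the quadratic inequality
   (1+alpha-2 alpha x) p^2 + (4 alpha x^2 - 8x) p + (1 - alpha + 4x) <= 0,
   whose leading coefficient is positive for x <= 1/2; hence p is at least the
   smaller root, which is the claimed bound. *)

From Stdlib Require Import Reals Lra Psatz.
Open Scope R_scope.

Lemma quadratic_nonpos_ge_smaller_root (a b c p : R) :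
  0 < a -> a * p ^ 2 + b * p + c <= 0 ->
  (- b - sqrt (b ^ 2 - 4 * a * c)) / (2 * a) <= p.
Proof.
  intros Ha Hq.
  set (D := b ^ 2 - 4 * a * c).
  assert (Hsquare : (2 * a * p + b) ^ 2 = 4 * a * (a * p ^ 2 + b * p + c) + D)
    by (unfold D; ring).
  assert (Hle : Rabs (2 * a * p + b) <= sqrt D).
  { rewrite <- sqrt_Rsqr_abs. apply sqrt_le_1_alt. unfold Rsqr. nra. }
  assert (Hlow : - b - sqrt D <= 2 * a * p).
  { pose proof (Rle_abs (- (2 * a * p + b))) as Habs.
    rewrite Rabs_Ropp in Habs. lra. }
  apply Rmult_le_reg_r with (2 * a); [lra |].
  unfold Rdiv. rewrite Rmult_assoc, Rinv_l by lra. lra.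
Qed.

Lemma ALG_ppm_isosceles (fplus fminus : R -> R) (x : R) :
  fminus (2 * x) = 2 * x ->
  ALG fplus fminus true true false x x (2 * x)
    = 2 * (2 * x * (1 - fplus x) + (1 - 2 * x) * fplus x) + (1 - fplus x) ^ 2.
Proof. intros Hm. unfold ALG, pval, ecost; simpl. rewrite Hm. ring. Qed.

Lemma LP_ppm_isosceles (fplus fminus : R -> R) (x : R) :
  fminus (2 * x) = 2 * x ->
  LP fplus fminus true true false x x (2 * x)
    = 2 * x * (1 - 2 * x * fplus x) + (1 - fplus x ^ 2) * (1 - 2 * x).
Proof. intros Hm. unfold LP, pval, elp; simpl. rewrite Hm. ring. Qed.

Theorem lemma4 (alpha : R) (fplus fminus : R -> R) :
  0 < alpha ->
  (forall x, 0 <= x <= 1 -> fminus x = x) ->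
  (forall x, 0 <= x <= 1 -> 0 <= fplus x <= 1) ->
  (forall (s_uv s_vw s_uw : bool) (x_uv x_vw x_uw : R),
      ppm_signs s_uv s_vw s_uw ->
      valid_lengths x_uv x_vw x_uw ->
      ALG fplus fminus s_uv s_vw s_uw x_uv x_vw x_uw
        <= alpha * LP fplus fminus s_uv s_vw s_uw x_uv x_vw x_uw) ->
  forall x, 0 <= x <= 1 / 2 ->
    fplus x >=
      (8 * x - 4 * alpha * x ^ 2
       - sqrt ((4 * alpha * x ^ 2 - 8 * x) ^ 2
               - 4 * (1 - alpha + 4 * x) * (1 + alpha - 2 * alpha * x)))
      / (2 * (1 + alpha - 2 * alpha * x)).
Proof.
  intros Halpha Hminus _ Hratio x Hx.
  assert (Hsigns : ppm_signs true true false) by (left; auto).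
  assert (Hlengths : valid_lengths x x (2 * x)) by (unfold valid_lengths; lra).
  assert (Hm : fminus (2 * x) = 2 * x) by (apply Hminus; lra).
  pose proof (Hratio _ _ _ _ _ _ Hsigns Hlengths) as Hineq.
  rewrite ALG_ppm_isosceles, LP_ppm_isosceles in Hineq by exact Hm.
  replace (8 * x - 4 * alpha * x ^ 2) with (- (4 * alpha * x ^ 2 - 8 * x)) by ring.
  replace (4 * (1 - alpha + 4 * x) * (1 + alpha - 2 * alpha * x))
    with (4 * (1 + alpha - 2 * alpha * x) * (1 - alpha + 4 * x)) by ring.
  apply Rle_ge, quadratic_nonpos_ge_smaller_root; nra.
Qed.
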